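(* Let $\varepsilon\in(0,1)$, $\alpha\in(0,1/5)$, $d$ with $\alpha d\ge1$, and let $G=(V,E)$ be a graph with no isolated vertices, $V=W\cup B$ a partition, $n=|V|$, such that: $G$ is an $(n,d,\alpha)$-expander; $G[W]$ has maximum degree $d_{\max}$ and minimum degree at least $2(\varepsilon+\alpha)d$; with $\delta=\varepsilon d/(d_{\max}-2\varepsilon d)$ we have $\frac{8(1+\delta)(d_{\max}+1)}{\delta^2\exp(\frac{\varepsilon}{40\alpha}\log(1+\delta))}\le1$ and $\frac{8}{d_{\max}-4\varepsilon d}\le 1$; and (B1) $|B|\le\alpha n$, (B2) no edge has both endpoints in $B$, (B3) $\deg v\le d_{\max}+1$ for all $v\in B$, (B4) $|N(v)\cap B|\le1$ for all $v\in V$. Then for every $X\subseteq V$, \[e(X,V)\le (d_{\max}+1)|X|.\]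
   Context: $\|M\|$ is the spectral norm, $J$ the $n\times n$ all-ones matrix; $G$ is an $(n,d,\alpha)$-expander if $|V|=n$ and $\|A_G-\frac dnJ\|\le\alpha d$ where $A_G$ is the adjacency matrix. For $X,Y\subseteq V$, $e(X,Y)=\sum_{x\in X,y\in Y}(A_G)_{x,y}$. $N(v)$ is the neighborhood of $v$ in $G$. *)

From HB Require Import structures.
From mathcomp Require Import all_boot all_order all_algebra.
From mathcomp Require Import all_classical all_reals all_analysis.
Set Implicit Arguments. Unset Strict Implicit. Unset Printing Implicit Defensive.
Import Order.TTheory GRing.Theory Num.Theory.
Local Open Scope ring_scope.
Local Open Scope classical_set_scope.

Section Graphs.
Variable R : realType.
Variable V : finType.

Definition simple_graph (adj : rel V) : Prop :=
  symmetric adj /\ irreflexive adj.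

Definition nbhd (adj : rel V) (v : V) : {set V} := [set u | adj v u].

Definition deg_in (adj : rel V) (S : {set V}) (v : V) : nat := #|nbhd adj v :&: S|.

Definition e_G (adj : rel V) (X Y : {set V}) : nat :=
  (\sum_(x in X) \sum_(y in Y) (adj x y : nat))%N.

Definition adjmx (adj : rel V) : V -> V -> R := fun u v => (adj u v : nat)%:R.
Definition onesmx : V -> V -> R := fun _ _ => 1.

Definition vnorm (x : V -> R) : R := Num.sqrt (\sum_v x v ^+ 2).
Definition mapply (M : V -> V -> R) (x : V -> R) : V -> R :=
  fun u => \sum_v M u v * x v.
Definition spec_norm (M : V -> V -> R) : R :=
  sup [set r | exists x : V -> R, vnorm x <= 1 /\ r = vnorm (mapply M x)].

Definition expander (adj : rel V) (n : nat) (d alpha : R) : Prop :=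
  #|V| = n /\
  spec_norm (fun u v => adjmx adj u v - (d / n%:R) * onesmx u v) <= alpha * d.

End Graphs.

(* Only degrees matter: a vertex of W has at most dmax neighbours in W and,
   by (B4), at most one in B, while a vertex of B has degree at most dmax + 1
   by (B3).  Summing the degree bound over X gives the claim. *)
From HB Require Import structures.
From mathcomp Require Import all_boot all_order all_algebra.
From mathcomp Require Import all_classical all_reals all_analysis.
Set Implicit Arguments. Unset Strict Implicit. Unset Printing Implicit Defensive.
Import Order.TTheory GRing.Theory Num.Theory.
Local Open Scope ring_scope.

Section Degrees.
Variables (V : finType) (adj : rel V).

Lemma e_G_setT (X : {set V}) :
  e_G adj X [set: V] = (\sum_(x in X) #|nbhd adj x|)%N.
Proof.
apply: eq_bigr => x _; rewrite -sum1_card [RHS]big_mkcond /=.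
by apply: eq_big => [y | y _]; rewrite !inE //; case: (adj x y).
Qed.

Lemma e_G_setT_le (k : nat) (X : {set V}) :
  (forall x, x \in X -> #|nbhd adj x| <= k)%N ->
  (e_G adj X [set: V] <= k * #|X|)%N.
Proof.
by move=> deg_le; rewrite e_G_setT mulnC -sum_nat_const; apply: leq_sum.
Qed.

Lemma card_nbhd_le_cover (W B : {set V}) (x : V) :
  W :|: B = [set: V] ->
  (#|nbhd adj x| <= deg_in adj W x + #|nbhd adj x :&: B|)%N.
Proof.
move=> WBT; rewrite -(cardsID W (nbhd adj x)) leq_add2l subset_leq_card //.
apply/fintype.subsetP => y; rewrite !inE => /andP [yNW ->] /=.
have : y \in W :|: B by rewrite WBT inE.
by rewrite inE (negbTE yNW).
Qed.

End Degrees.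

Theorem lemma2p7 (R : realType) (V : finType) (adj : rel V)
  (W B : {set V}) (eps alpha d : R) (dmax : nat) :
  simple_graph adj ->
  (forall v : V, exists u : V, adj v u) ->
  W :&: B = finset.set0 -> W :|: B = [set: V] ->
  0 < eps -> eps < 1 -> 0 < alpha -> alpha < 1 / 5 -> 1 <= alpha * d ->
  @expander R V adj #|V| d alpha ->
  dmax = (\max_(v in W) deg_in adj W v)%N ->
  (forall v, v \in W -> 2 * (eps + alpha) * d <= (deg_in adj W v)%:R) ->
  (let delta := eps * d / (dmax%:R - 2 * eps * d) in
   8 * (1 + delta) * (dmax%:R + 1)
     / (delta ^+ 2 * expR (eps / (40 * alpha) * ln (1 + delta))) <= 1) ->
  8 / (dmax%:R - 4 * eps * d) <= 1 ->
  (#|B|%:R <= alpha * #|V|%:R) ->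
  (forall u v, u \in B -> v \in B -> ~~ adj u v) ->
  (forall v, v \in B -> (#|nbhd adj v| <= dmax.+1)%N) ->
  (forall v, (#|nbhd adj v :&: B| <= 1)%N) ->
  forall X : {set V}, (e_G adj X [set: V] <= dmax.+1 * #|X|)%N.
Proof.
move=> _ _ _ WBT _ _ _ _ _ _ dmaxE _ _ _ _ _ degB nbhdB X.
apply: e_G_setT_le => x _.
have /setUP [xW | xB] : x \in W :|: B by rewrite WBT inE.
- apply: leq_trans (card_nbhd_le_cover adj x WBT) _.
  rewrite -addn1 leq_add // dmaxE.
  exact: leq_bigmax_cond.
- exact: degB.
Qed.
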